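(* Let $X=\{\mathbf{x}_1,\dots,\mathbf{x}_m\}\subset\mathbb{R}^n$ be a finite set of labeled points, with labels $y_i\in\{-1,1\}$, that is linearly separable. Let $(\mathbf{w},b)$ be the solution of the hard-margin SVM problem for $X$, let $\mathcal{P}=\{\mathbf{x}\in\mathbb{R}^n : \mathbf{w}^T\mathbf{x}+b=0\}$ be the separating hyperplane, and let $\rho\colon\mathbb{R}^n\to\mathcal{P}$ be the orthogonal projection onto $\mathcal{P}$. Let $S_+$ (resp. $S_-$) be the set of support vectors with label $+1$ (resp. $-1$). Then $\rho(\mathrm{conv}(S_+))\cap\rho(\mathrm{conv}(S_-))\neq\emptyset$.
   Context: Labeled points $X$ with labels $y_i\in\{-1,1\}$ (both labels occurring) are linearly separable if there is a hyperplane in $\mathbb{R}^n$ with all points labeled $+1$ strictly on one side and all points labeled $-1$ strictly on the other. The hard-margin SVM problem is: minimize $\frac12\|\mathbf{w}\|^2$ over $\mathbf{w}\in\mathbb{R}^n$, $b\in\mathbb{R}$, subject to $y_i(\mathbf{w}^T\mathbf{x}_i+b)\ge 1$ for all $i$. At the optimum, $\min_i|\mathbf{w}^T\mathbf{x}_i+b|=1$, and the support vectors are the points $\mathbf{x}_i$ with $|\mathbf{w}^T\mathbf{x}_i+b|=1$, i.e. $y_i(\mathbf{w}^T\mathbf{x}_i+b)=1$. $\mathrm{conv}(T)$ denotes the convex hull of $T$. *)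

(* points of R^n are row vectors 'rV[R]_n over R : realType. *)
From mathcomp Require Import all_boot all_order all_algebra.
From mathcomp Require Import reals.
Set Implicit Arguments. Unset Strict Implicit. Unset Printing Implicit Defensive.
Import Order.TTheory GRing.Theory Num.Theory.
Local Open Scope ring_scope.

Section SVM.
Variables (R : realType) (n m : nat).

Definition dot (u v : 'rV[R]_n) : R := \sum_(k < n) u 0 k * v 0 k.

Definition labels_ok (y : 'I_m -> R) : Prop :=
  (forall i, y i = 1 \/ y i = -1) /\ (exists i, y i = 1) /\ (exists j, y j = -1).

Definition lin_separable (x : 'I_m -> 'rV[R]_n) (y : 'I_m -> R) : Prop :=
  exists (w : 'rV[R]_n) (b : R), forall i, 0 < y i * (dot w (x i) + b).

Definition svm_feasible (x : 'I_m -> 'rV[R]_n) (y : 'I_m -> R)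
  (w : 'rV[R]_n) (b : R) : Prop :=
  forall i, 1 <= y i * (dot w (x i) + b).

Definition svm_solution (x : 'I_m -> 'rV[R]_n) (y : 'I_m -> R)
  (w : 'rV[R]_n) (b : R) : Prop :=
  svm_feasible x y w b /\
  forall w' b', svm_feasible x y w' b' -> dot w w / 2 <= dot w' w' / 2.

Definition support_idx (x : 'I_m -> 'rV[R]_n) (y : 'I_m -> R)
  (w : 'rV[R]_n) (b : R) (s : R) (i : 'I_m) : Prop :=
  y i = s /\ y i * (dot w (x i) + b) = 1.

Definition conv_of (P : 'I_m -> Prop) (x : 'I_m -> 'rV[R]_n) (p : 'rV[R]_n) : Prop :=
  exists lam : 'I_m -> R,
    (forall i, 0 <= lam i) /\ (forall i, ~ P i -> lam i = 0) /\
    \sum_(i < m) lam i = 1 /\ p = \sum_(i < m) lam i *: x i.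

Definition proj_hyp (w : 'rV[R]_n) (b : R) (p : 'rV[R]_n) : 'rV[R]_n :=
  p - ((dot w p + b) / dot w w) *: w.

End SVM.

From mathcomp Require Import all_boot all_order all_algebra.
From mathcomp Require Import reals.
From mathcomp Require Import ring lra.
Set Implicit Arguments. Unset Strict Implicit. Unset Printing Implicit Defensive.
Import Order.TTheory GRing.Theory Num.Theory.
Local Open Scope ring_scope.

(* Optimality of (w, b) gives KKT multipliers: by Farkas' lemma in R^n x R,
   either (w, 0) is a nonnegative combination of the vectors (y_i x_i, y_i) of
   the support vectors, or some (v, c) is nonnegative on all of them and
   negative on (w, 0); in the latter case (w + t v, b + t c) stays feasible for
   small t > 0 while |w|^2 decreases.  So w = sum beta_i y_i x_i with
   beta >= 0 supported on support vectors and sum beta_i y_i = 0.  Then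
   sum beta_i = sum beta_i y_i (w.x_i + b) = |w|^2, so each class carries mass
   |w|^2 / 2, and the beta-weighted barycentres p, q of S+ and S- satisfy
   p - q = (2 / |w|^2) w, a normal vector of the hyperplane: rho p = rho q. *)

Lemma scaler_sum_shift (R : pzRingType) (V : lmodType R) (k : nat)
    (mu t : nat -> R) (a : nat -> V) (u c : V) (s : R) :
  c - s *: u = \sum_(i < k) mu i *: (a i - t i *: u) ->
  c = \sum_(i < k) mu i *: a i + (s - \sum_(i < k) mu i * t i) *: u.
Proof.
move=> /eqP; rewrite subr_eq => /eqP ->.
under eq_bigr do rewrite scalerBr scalerA.
by rewrite sumrB scalerBl scaler_suml addrAC addrA.
Qed.

Section Farkas.
Variables (R : realFieldType) (V : lmodType R) (d : V -> V -> R).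
Hypothesis dlB : forall u v z t, d (u - t *: v) z = d u z - t * d v z.
Hypothesis drB : forall u v z t, d z (u - t *: v) = d z u - t * d z v.
Hypothesis d_gt0 : forall c, c != 0 -> 0 < d c c.

Lemma d_proj_swap y z u v :
  d (z - (d z u / d y u) *: y) v = d z (v - (d y v / d y u) *: u).
Proof. by rewrite dlB drB mulrAC [d y v / _ * _]mulrAC [d z u * _]mulrC. Qed.

Lemma farkas k (a : nat -> V) (c : V) :
  (exists2 mu : nat -> R, (forall i, 0 <= mu i) & c = \sum_(i < k) mu i *: a i) \/
  (exists2 z, (forall i, (i < k)%N -> 0 <= d z (a i)) & d z c < 0).
Proof.
elim: k a c => [|k IH] a c.
  have [->|c0] := eqVneq c 0; first by left; exists (fun=> 0); rewrite ?big_ord0.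
  by right; exists (c - 2%:R *: c) => //; rewrite dlB; have := d_gt0 c0; lra.
have [[mu mu0 ->]|[y ya yc]] := IH a c.
  left; exists (fun i => if (i < k)%N then mu i else 0) => [i|]; first by case: ifP.
  rewrite big_ord_recr /= ltnn scale0r addr0.
  by apply: eq_bigr => i _; rewrite ltn_ord.
set be := d y (a k).
have [be_ge0|be_lt0] := leP 0 be.
  by right; exists y => // i; rewrite ltnS leq_eqVlt => /predU1P[->|/ya].
(* Fourier-Motzkin step: eliminate [a k] by projecting the other generators and
   [c] along [a k] onto the kernel of [d y]. *)
have [[mu mu0 /(@scaler_sum_shift _ _ _ _ (fun i => d y (a i) / be) a) ->]
     |[z za zc]] :=
  IH (fun i => a i - (d y (a i) / be) *: a k) (c - (d y c / be) *: a k).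
  left; exists (fun i => if (i < k)%N then mu i else
                 d y c / be - \sum_(j < k) mu j * (d y (a j) / be)).
    move=> i; case: ifP => // _.
    have S_ge0 : 0 <= \sum_(j < k) mu j * d y (a j).
      by apply: sumr_ge0 => j _; rewrite mulr_ge0 ?ya.
    rewrite (eq_bigr _ (fun j _ => mulrA _ _ _)) -mulr_suml -mulrBl.
    by rewrite ltW // nmulr_rgt0 ?invr_lt0 // subr_lt0 (lt_le_trans yc).
  by rewrite big_ord_recr /= ltnn; congr (_ + _); apply: eq_bigr => i _; rewrite ltn_ord.
right; exists (z - (d z (a k) / be) *: y).
  move=> i; rewrite ltnS leq_eqVlt => /predU1P[->|/za].
    by rewrite dlB divfK ?subrr // lt_eqF.
  by rewrite d_proj_swap.
by rewrite d_proj_swap.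
Qed.
End Farkas.

Lemma exists_small_step (R : realFieldType) (I : finType) (s g : I -> R) (t0 : R) :
  0 < t0 -> (forall i, 0 <= s i) -> (forall i, s i = 0 -> 0 <= g i) ->
  exists2 t, 0 < t <= t0 & forall i, 0 <= s i + t * g i.
Proof.
move=> t0_gt0 s_ge0 g_ge0.
pose t := \big[Order.min/t0]_(i | 0 < s i) (s i / (`|g i| + 1)).
have ag_gt0 i : 0 < `|g i| + 1 by rewrite ltr_wpDl.
have t_gt0 : 0 < t by apply: lt_bigmin => // i si; rewrite divr_gt0.
exists t => [|i]; first by rewrite t_gt0 bigmin_le_id.
have [si0|si_gt0] := eqVneq (s i) 0.
  by rewrite si0 add0r mulr_ge0 ?g_ge0 ?ltW.
have {si_gt0}si_gt0 : 0 < s i by rewrite lt_def si_gt0 s_ge0.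
have t_le : t * (`|g i| + 1) <= s i.
  by rewrite -ler_pdivlMr // (bigmin_le_cond _ _ si_gt0).
have : - (t * `|g i|) <= t * g i.
  by rewrite -mulrN ler_wpM2l ?(ltW t_gt0) // lerNnormlW.
lra.
Qed.

Section Dot.
Variables (R : realType) (n : nat).
Implicit Types u v z : 'rV[R]_n.

Lemma dotC u v : dot u v = dot v u.
Proof. by apply: eq_bigr => k _; rewrite mulrC. Qed.

Lemma dotDr z u v : dot z (u + v) = dot z u + dot z v.
Proof. by rewrite /dot -big_split; apply: eq_bigr => k _; rewrite mxE mulrDr. Qed.

Lemma dotZr z t u : dot z (t *: u) = t * dot z u.
Proof. by rewrite /dot mulr_sumr; apply: eq_bigr => k _; rewrite mxE mulrCA. Qed.

Lemma dotBr z u v : dot z (u - v) = dot z u - dot z v.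
Proof. by rewrite -scaleN1r dotDr dotZr mulN1r. Qed.

Lemma dotDl z u v : dot (u + v) z = dot u z + dot v z.
Proof. by rewrite dotC dotDr !(dotC z). Qed.

Lemma dotZl z t u : dot (t *: u) z = t * dot u z.
Proof. by rewrite dotC dotZr dotC. Qed.

Lemma dotBl z u v : dot (u - v) z = dot u z - dot v z.
Proof. by rewrite !(dotC _ z) dotBr. Qed.

Lemma dot0l z : dot 0 z = 0.
Proof. by rewrite /dot big1 // => k _; rewrite mxE mul0r. Qed.

Lemma dot_sumr (I : finType) z (F : I -> 'rV[R]_n) :
  dot z (\sum_i F i) = \sum_i dot z (F i).
Proof. by apply: big_morph => [u v|]; rewrite ?dotDr // dotC dot0l. Qed.

Lemma dot_ge0 u : 0 <= dot u u.
Proof. by apply: sumr_ge0 => k _; rewrite -expr2 sqr_ge0. Qed.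

Lemma dot_gt0 u : u != 0 -> 0 < dot u u.
Proof.
move=> u0; rewrite lt_def dot_ge0 andbT; apply: contraNneq u0.
move/eqP; rewrite /dot psumr_eq0 => [/allP u_eq0|k _]; last by rewrite -expr2 sqr_ge0.
apply/eqP/rowP => k; rewrite mxE.
by have := u_eq0 k (mem_index_enum k); rewrite -expr2 sqrf_eq0 => /eqP.
Qed.

Lemma dot_descent v w : dot v w < 0 ->
  exists2 t0, 0 < t0 & forall t, 0 < t <= t0 -> dot (w + t *: v) (w + t *: v) < dot w w.
Proof.
move=> vw_lt0; have vv_ge0 := dot_ge0 v.
have vv1_gt0 : 0 < dot v v + 1 by rewrite ltr_wpDl.
exists (- dot v w / (dot v v + 1)) => [|t /andP[t_gt0 t_le]].
  by rewrite divr_gt0 ?oppr_gt0.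
have tvv : t * dot v v + t <= - dot v w by rewrite -{2}[t]mulr1 -mulrDr -ler_pdivlMr.
rewrite dotDl !dotDr !dotZl !dotZr (dotC w v).
have : t * (t * dot v v) <= t * - dot v w - t * t.
  by rewrite -mulrBr ler_wpM2l ?(ltW t_gt0) //; lra.
have : t * dot v w < 0 by rewrite pmulr_rlt0.
nra.
Qed.

End Dot.

Section PairDot.
Variables (R : realType) (n : nat).
Implicit Types p q r : 'rV[R]_n * R^o.

Definition pair_dot p q : R := dot p.1 q.1 + p.2 * q.2.

Lemma pair_dotBl p q r t : pair_dot (p - t *: q) r = pair_dot p r - t * pair_dot q r.
Proof. by rewrite /pair_dot /= dotBl dotZl -[t *: q.2]/(t * q.2); ring. Qed.

Lemma pair_dotBr p q r t : pair_dot r (p - t *: q) = pair_dot r p - t * pair_dot r q.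
Proof. by rewrite /pair_dot /= dotBr dotZr -[t *: q.2]/(t * q.2); ring. Qed.

Lemma pair_dot_gt0 p : p != 0 -> 0 < pair_dot p p.
Proof.
case: p => u s; rewrite /pair_dot /=.
have [->|u0] := eqVneq u 0; last first.
  by move=> _; have := dot_gt0 u0; have := sqr_ge0 s; rewrite expr2; lra.
move=> s0; have {}s0 : s != 0 by apply: contraNneq s0 => ->.
by rewrite dot0l add0r lt_def -expr2 sqrf_eq0 s0 sqr_ge0.
Qed.

End PairDot.

Lemma proj_hyp_addZ (R : realType) (n : nat) (w p : 'rV[R]_n) (b t : R) :
  w != 0 -> proj_hyp w b (p + t *: w) = proj_hyp w b p.
Proof.
move=> w0; rewrite /proj_hyp dotDr dotZr [dot w p + _ + b]addrAC mulrDl.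
rewrite mulfK ?gt_eqF ?dot_gt0 //.
by rewrite scalerDl opprD addrACA subrr addr0.
Qed.

Lemma svm_feasible_neq0 (R : realType) (n m : nat) (x : 'I_m -> 'rV[R]_n)
    (y : 'I_m -> R) (w : 'rV[R]_n) (b : R) :
  (exists i, y i = 1) -> (exists j, y j = -1) -> svm_feasible x y w b -> w != 0.
Proof.
move=> [i yi] [j yj] feas; apply/eqP => w0.
by have := feas i; have := feas j; rewrite yi yj w0 !dot0l; lra.
Qed.

Section SVMSolution.
Variables (R : realType) (n m : nat) (x : 'I_m -> 'rV[R]_n) (y : 'I_m -> R).
Variables (w : 'rV[R]_n) (b : R).
Hypothesis hsol : svm_solution x y w b.

Lemma svm_solution_dir_ge0 v c :
  (forall i, y i * (dot w (x i) + b) = 1 -> 0 <= y i * (dot v (x i) + c)) ->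
  0 <= dot v w.
Proof.
move=> v_active; rewrite leNgt; apply/negP => /dot_descent[t0 t0_gt0 w_decr].
have [feas opt] := hsol.
have [t /andP[t_gt0 t_le] step_feas] : exists2 t, 0 < t <= t0 &
    forall i, 0 <= y i * (dot w (x i) + b) - 1 + t * (y i * (dot v (x i) + c)).
  apply: exists_small_step => // i; first by rewrite subr_ge0.
  by move/eqP; rewrite subr_eq0 => /eqP /v_active.
have : svm_feasible x y (w + t *: v) (b + t * c).
  by move=> i; have := step_feas i; rewrite dotDl dotZl; lra.
move=> /opt; have := w_decr t; rewrite t_gt0 t_le; lra.
Qed.

Definition kkt_multipliers (beta : 'I_m -> R) : Prop :=
  [/\ forall i, 0 <= beta i,
      forall i, beta i != 0 -> y i * (dot w (x i) + b) = 1,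
      w = \sum_i (beta i * y i) *: x i &
      \sum_i beta i * y i = 0].

Lemma svm_solution_kkt : exists beta, kkt_multipliers beta.
Proof.
pose active i := y i * (dot w (x i) + b) == 1.
pose a (j : nat) : 'rV[R]_n * R^o :=
  if insub j is Some i then if active i then (y i *: x i, y i : R^o) else 0 else 0.
have aE (i : 'I_m) : a i = if active i then (y i *: x i, y i : R^o) else 0.
  by rewrite /a valK.
have [[mu mu_ge0 w_cone]|[[v c] v_active vw_lt0]] :=
  farkas (@pair_dotBl R n) (@pair_dotBr R n) (@pair_dot_gt0 R n) m a (w, 0 : R^o).
  exists (fun i => if active i then mu i else 0); split.
  - by move=> i; case: ifP.
  - by move=> i; case: ifP => [/eqP|]; rewrite ?eqxx.
  - have /(congr1 fst) /= -> := w_cone; rewrite (big_morph fst (id1 := 0) (op1 := +%R)) //.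
    apply: eq_bigr => i _; rewrite aE.
    by case: ifP => _ /=; rewrite ?scalerA // mul0r scale0r scaler0.
  - have /(congr1 snd) /= w_snd := w_cone.
    rewrite [RHS]w_snd (big_morph snd (id1 := 0) (op1 := +%R)) //.
    by apply: eq_bigr => i _; rewrite aE; case: ifP; rewrite /= ?mul0r ?scaler0.
exfalso; move: vw_lt0; rewrite /pair_dot /= mulr0 addr0 ltNge => /negP; apply.
apply: (@svm_solution_dir_ge0 _ c) => i /eqP act_i; have := v_active i (ltn_ord i).
by rewrite aE /active act_i /pair_dot /= dotZr mulrDr [c * _]mulrC.
Qed.

End SVMSolution.

Section Multipliers.
Variables (R : realType) (n m : nat) (x : 'I_m -> 'rV[R]_n) (y : 'I_m -> R).
Variables (w : 'rV[R]_n) (b : R) (beta : 'I_m -> R).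
Hypothesis y_pm1 : forall i, y i = 1 \/ y i = -1.
Hypothesis hkkt : kkt_multipliers x y w b beta.

Definition class_mass (s : R) : R := \sum_i (if y i == s then beta i else 0).

Definition class_point (s : R) : 'rV[R]_n :=
  \sum_i ((if y i == s then beta i else 0) / class_mass s) *: x i.

Let N1_eq1 : ((-1 : R) == 1) = false.
Proof. by rewrite lt_eqF // (lt_trans (ltrN10 R) ltr01). Qed.

Let one_eqN1 : ((1 : R) == -1) = false.
Proof. by rewrite eq_sym N1_eq1. Qed.

Lemma class_mass_sub : class_mass 1 - class_mass (-1) = 0.
Proof.
have [_ _ _ <-] := hkkt; rewrite -sumrB; apply: eq_bigr => i _.
by case: (y_pm1 i) => ->; rewrite ?eqxx ?N1_eq1 ?one_eqN1; ring.
Qed.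

Lemma class_mass_add : class_mass 1 + class_mass (-1) = dot w w.
Proof.
have [_ beta_act w_comb beta_bal] := hkkt.
have -> : dot w w = \sum_i beta i * (y i * (dot w (x i) + b)).
  rewrite {2}w_comb dot_sumr; under [RHS]eq_bigr do rewrite mulrA mulrDr.
  rewrite big_split /= -big_distrl /= beta_bal mul0r addr0.
  by apply: eq_bigr => i _; rewrite dotZr.
rewrite -big_split; apply: eq_bigr => i _.
have [->|/beta_act ->] := eqVneq (beta i) 0; first by rewrite mul0r !if_same /= addr0.
by rewrite mulr1 /=; case: (y_pm1 i) => ->; rewrite ?eqxx ?N1_eq1 ?one_eqN1; ring.
Qed.

Lemma class_mass_half s : s = 1 \/ s = -1 -> class_mass s = dot w w / 2.
Proof.
by move=> s_pm1; have := class_mass_sub; have := class_mass_add; case: s_pm1 => ->; lra.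
Qed.

Lemma class_point_conv s : s = 1 \/ s = -1 -> w != 0 ->
  conv_of (support_idx x y w b s) x (class_point s).
Proof.
move=> s_pm1 w0; have [beta_ge0 beta_act _ _] := hkkt.
have mass_gt0 : 0 < class_mass s by rewrite class_mass_half // divr_gt0 ?dot_gt0.
exists (fun i => (if y i == s then beta i else 0) / class_mass s).
split=> [i|]; first by rewrite divr_ge0 ?(ltW mass_gt0) //; case: ifP.
split=> [i not_supp|]; last by rewrite -mulr_suml divff ?gt_eqF.
case: eqP => [ys|_]; last by rewrite mul0r.
have [->|/beta_act act] := eqVneq (beta i) 0; first by rewrite mul0r.
by case: not_supp.
Qed.

Lemma class_point_sub : w != 0 ->
  class_point 1 = class_point (-1) + (2 / dot w w) *: w.
Proof.
move=> w0; have [_ _ w_comb _] := hkkt; have ww0 : dot w w != 0 by rewrite gt_eqF ?dot_gt0.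
rewrite /class_point !class_mass_half; [|by right|by left].
rewrite [X in (2 / _) *: X]w_comb scaler_sumr -big_split; apply: eq_bigr => i _.
rewrite /= scalerA -scalerDl; congr (_ *: _).
by case: (y_pm1 i) => ->; rewrite ?eqxx ?N1_eq1 ?one_eqN1; field.
Qed.

End Multipliers.

Theorem lemma4p1 (R : realType) (n m : nat)
  (x : 'I_m -> 'rV[R]_n) (y : 'I_m -> R)
  (hy : labels_ok y) (hsep : lin_separable x y)
  (w : 'rV[R]_n) (b : R) (hsol : svm_solution x y w b) :
  exists p q : 'rV[R]_n,
    conv_of (support_idx x y w b 1) x p /\
    conv_of (support_idx x y w b (-1)) x q /\
    proj_hyp w b p = proj_hyp w b q.
Proof.
have [y_pm1 [pos neg]] := hy.
have w0 : w != 0 := svm_feasible_neq0 pos neg hsol.1.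
have [beta hkkt] := svm_solution_kkt hsol.
exists (class_point x y beta 1), (class_point x y beta (-1)).
split; first by apply: (class_point_conv y_pm1 hkkt) => //; left.
split; first by apply: (class_point_conv y_pm1 hkkt) => //; right.
by rewrite (class_point_sub y_pm1 hkkt w0) proj_hyp_addZ.
Qed.
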